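(* Under the setting below, assume in addition $0<\underline h\le h_{\rm in}\le\overline h<\infty$ and $0\le A_{\rm in}\le 1$, and set $K:=|\overline f|+|\underline f|$. Then $h_m\ge0$ on $\Omega\times[0,T]$. Moreover, for every $t\in[0,T]$ with $$t\le \frac{\underline h}{6K}\qquad\text{and}\qquad \exp\Big(\int_0^t\|\operatorname{div}\vec u^o(s)\|_{L^\infty(\Omega)}\,ds\Big)\le 2,$$ one has $\tfrac14\underline h\le h_m(\cdot,t)\le 4\overline h$ on $\Omega$; and for every $t\in[0,T]$ with $t\le \int_\Omega h_{\rm in}\,dx\big/\big(6K|\Omega|\big)$ one has $$\tfrac12\int_\Omega h_{\rm in}\,dx\le\int_\Omega h_m(x,t)\,dx\le 2\int_\Omega h_{\rm in}\,dx.$$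
   Context: Setting: $\Omega=\mathbb T^2$, $\omega,\nu\in(0,1)$, $T>0$, $\vec u^o:\Omega\times[0,T]\to\mathbb R^2$ a given smooth velocity field, and $(h_m,A_m)$ a sufficiently regular (e.g. classical) solution on $[0,T]$ of $$\partial_t h_m+\operatorname{div}(h_m\vec u^o)=\mathcal S_{h_m,\omega,\nu},\qquad \partial_tA_m+\operatorname{div}(A_m\vec u^o)=\mathcal S_{A_m,\omega,\nu}+A_m\operatorname{div}\vec u^o\cdot\chi^\omega_{A_m},$$ with $h_m(0)=h_{\rm in}$, $A_m(0)=A_{\rm in}$. Here $\psi^+=\max\{\psi,0\}$, $f:\mathbb R\to\mathbb R$ is smooth with $\underline f\le f\le\overline f$, $h_0>0$, and for functions $h,A$: $\chi^\nu_h=h^+/(h^++\nu)$, $\mathcal S_{h,\omega,\nu}=[f(h^+/(A^++\omega))A+(1-A)f(0)]\chi^\nu_h$, $\mathcal S_{A,\omega,\nu}=\frac{(f(0))^+}{h_0+\nu}(1-A)-\frac{A}{2h^++\nu}\cdot\frac{\sqrt{|\mathcal S_{h,\omega,\nu}|^2+\omega^2}-\mathcal S_{h,\omega,\nu}}{2}$, $\chi^\omega_A=1-\frac{(1-A)^+}{(1-A)^++\omega}$, evaluated at $(h_m,A_m)$. *)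

From Stdlib Require Import Reals Lra.
From Coquelicot Require Import Coquelicot.
Open Scope R_scope.

(* The torus T^2 is realised as (R/Z)^2: functions on R^2 that are 1-periodic
   in each variable; the fundamental domain is [0,1]^2, so |Omega| = 1. *)
Definition torus_meas : R := 1.

Definition periodic2 (g : R -> R -> R) : Prop :=
  forall x y, g (x + 1) y = g x y /\ g x (y + 1) = g x y.

Definition periodic3 (g : R -> R -> R -> R) : Prop :=
  forall x y t, g (x + 1) y t = g x y t /\ g x (y + 1) t = g x y t.

Definition intOmega (g : R -> R -> R) : R :=
  RInt (fun x => RInt (fun y => g x y) 0 1) 0 1.

Definition dx (g : R -> R -> R -> R) : R -> R -> R -> R :=
  fun x y t => Derive (fun z => g z y t) x.
Definition dy (g : R -> R -> R -> R) : R -> R -> R -> R :=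
  fun x y t => Derive (fun z => g x z t) y.
Definition dt (g : R -> R -> R -> R) : R -> R -> R -> R :=
  fun x y t => Derive (fun z => g x y z) t.

Inductive dir := Dx | Dy | Dt.
Definition pd (d : dir) (g : R -> R -> R -> R) : R -> R -> R -> R :=
  match d with Dx => dx g | Dy => dy g | Dt => dt g end.
Definition ex_pd (d : dir) (g : R -> R -> R -> R) (x y t : R) : Prop :=
  match d with
  | Dx => ex_derive (fun z => g z y t) x
  | Dy => ex_derive (fun z => g x z t) y
  | Dt => ex_derive (fun z => g x y z) t
  end.
Definition iterD (l : list dir) (g : R -> R -> R -> R) := List.fold_right pd g l.

Definition joint3 (g : R -> R -> R -> R) : R * R * R -> R :=
  fun p => g (fst (fst p)) (snd (fst p)) (snd p).

Definition smooth3 (g : R -> R -> R -> R) : Prop :=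
  forall l : list dir,
    (forall p, continuous (joint3 (iterD l g)) p) /\
    (forall d x y t, ex_pd d (iterD l g) x y t).

Definition smooth1 (f : R -> R) : Prop := forall n x, ex_derive_n f n x.

Definition divu (u1 u2 : R -> R -> R -> R) : R -> R -> R -> R :=
  fun x y t => dx u1 x y t + dy u2 x y t.
Definition divflux (g u1 u2 : R -> R -> R -> R) : R -> R -> R -> R :=
  fun x y t => dx (fun a b c => g a b c * u1 a b c) x y t
             + dy (fun a b c => g a b c * u2 a b c) x y t.

(* ||div u(s)||_{L^infty(Omega)} (essential sup = sup for continuous fields) *)
Definition LinfOmega (g : R -> R -> R) : R :=
  real (Lub_Rbar (fun r => exists x y, 0 <= x <= 1 /\ 0 <= y <= 1 /\ r = Rabs (g x y))).

Definition pos (p : R) : R := Rmax p 0.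

Definition chi_h (nu h : R) : R := pos h / (pos h + nu).
Definition S_h (f : R -> R) (om nu h A : R) : R :=
  (f (pos h / (pos A + om)) * A + (1 - A) * f 0) * chi_h nu h.
Definition S_A (f : R -> R) (h0 om nu h A : R) : R :=
  pos (f 0) / (h0 + nu) * (1 - A)
  - A / (2 * pos h + nu) *
    ((sqrt (S_h f om nu h A ^ 2 + om ^ 2) - S_h f om nu h A) / 2).
Definition chi_A (om A : R) : R := 1 - pos (1 - A) / (pos (1 - A) + om).

Definition classical_reg (T : R) (g : R -> R -> R -> R) : Prop :=
  (forall x y t, 0 <= t <= T ->
     filterlim (joint3 g) (within (fun p => 0 <= snd p <= T) (locally (x, y, t)))
               (locally (g x y t))) /\
  (forall d x y t, 0 < t < T -> ex_pd d g x y t) /\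
  (forall d x y t, 0 < t < T ->
     filterlim (joint3 (pd d g)) (within (fun p => 0 < snd p < T) (locally (x, y, t)))
               (locally (pd d g x y t))).

From Pilot Require Import Defs.
From Stdlib Require Import Reals.
From Coquelicot Require Import Coquelicot.
From Stdlib Require Import ZArith Lra Lia Classical ClassicalEpsilon.
Open Scope R_scope.

(* - Pointwise bounds (A in [0,1], h >= 0, hl/4 <= h <= 4 hu) follow from a
     maximum principle ([comparison_principle]): if s*g + phi (s = +-1,
     phi a function of time only) is positive at t = 0 and has positive time
     derivative at every point where it vanishes with vanishing spatial
     gradient, then it stays nonnegative.  At such a touching point the
     transport equation reduces to an ODE inequality in which div u is
     controlled by L(t) = ||div u(t)||_inf, so the barriers are built from
     E(t) = exp (int_0^t L).  Its proof is a first-touching-time argument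
     ([positive_until_first_touch]), which needs compactness of the unit square
     and periodicity to make the touching time well defined.
   - The mass bound follows from d/dt int h = int S_h, because the flux
     terms integrate to zero by periodicity, and |S_h| <= K; a mean value
     inequality then gives |int h(t) - int hin| <= K t.

   Continuity on space-time is handled through the epsilon-delta predicate
   [cont3], restricted to times in a set D (to model one-sided continuity at
   t = 0 and t = T). *)

Definition cont3 (D : R -> Prop) (g : R -> R -> R -> R) (x y t : R) : Prop :=
  forall eps, 0 < eps -> exists d, 0 < d /\ forall x' y' t',
    Rabs (x' - x) < d -> Rabs (y' - y) < d -> Rabs (t' - t) < d -> D t' ->
    Rabs (g x' y' t' - g x y t) < eps.

Lemma ball_R_iff (a e b : R) : ball a e b <-> Rabs (b - a) < e.
Proof. unfold ball; simpl; unfold AbsRing_ball, abs, minus, plus, opp; simpl. tauto. Qed.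

Lemma continuous_ed (phi : R -> R) t : continuous phi t ->
  forall eps, 0 < eps -> exists d, 0 < d /\
    forall t', Rabs (t' - t) < d -> Rabs (phi t' - phi t) < eps.
Proof.
intros H eps He.
destruct (H (ball (phi t) (mkposreal _ He))) as [d Hd]; [apply locally_ball|].
exists d. split; [apply cond_pos|]. intros t' Ht'.
apply ball_R_iff, Hd, ball_R_iff, Ht'.
Qed.

Lemma ed_continuous (phi : R -> R) t :
  (forall eps, 0 < eps -> exists d, 0 < d /\
     forall t', Rabs (t' - t) < d -> Rabs (phi t' - phi t) < eps) ->
  continuous phi t.
Proof.
intros H P [e He]. destruct (H e (cond_pos e)) as [d [Hd K]].
exists (mkposreal d Hd). intros t' Ht'. apply He, ball_R_iff, K, ball_R_iff, Ht'.
Qed.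

Lemma cont3_of_filterlim (D : R -> Prop) g x y t :
  filterlim (joint3 g) (within (fun p => D (snd p)) (locally (x, y, t)))
    (locally (g x y t)) ->
  cont3 D g x y t.
Proof.
intros H eps He.
destruct (H (ball (g x y t) (mkposreal _ He))) as [d Hd]; [apply locally_ball|].
exists d. split; [apply cond_pos|]. intros x' y' t' H1 H2 H3 HD.
apply ball_R_iff, (Hd (x', y', t')); [|exact HD].
split; [split|]; apply ball_R_iff; assumption.
Qed.

Lemma cont3_of_continuous g x y t :
  continuous (joint3 g) (x, y, t) -> cont3 (fun _ => True) g x y t.
Proof.
intros H eps He.
destruct (H (ball (g x y t) (mkposreal _ He))) as [d Hd]; [apply locally_ball|].
exists d. split; [apply cond_pos|]. intros x' y' t' H1 H2 H3 _.
apply ball_R_iff, (Hd (x', y', t')).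
split; [split|]; apply ball_R_iff; assumption.
Qed.

Lemma cont3_weaken (D1 D2 : R -> Prop) g x y t :
  (forall s, D2 s -> D1 s) -> cont3 D1 g x y t -> cont3 D2 g x y t.
Proof.
intros HD H eps He. destruct (H eps He) as [d [Hd K]]. exists d; split; auto.
Qed.

Lemma cont3_interior (D : R -> Prop) g x y t a b :
  a < t < b -> (forall s, a < s < b -> D s) -> cont3 D g x y t ->
  cont3 (fun _ => True) g x y t.
Proof.
intros Ht HD H eps He. destruct (H eps He) as [d [Hd K]].
exists (Rmin d (Rmin (t - a) (b - t))). split; [repeat apply Rmin_pos; lra|].
intros x' y' t' H1 H2 H3 _.
assert (Hm1 := Rmin_l d (Rmin (t - a) (b - t))).
assert (Hm2 := Rmin_r d (Rmin (t - a) (b - t))).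
assert (Hm3 := Rmin_l (t - a) (b - t)).
assert (Hm4 := Rmin_r (t - a) (b - t)).
apply K; try lra. apply HD. apply Rabs_def2 in H3. lra.
Qed.

Lemma cont3_plus D g1 g2 x y t : cont3 D g1 x y t -> cont3 D g2 x y t ->
  cont3 D (fun a b c => g1 a b c + g2 a b c) x y t.
Proof.
intros H1 H2 eps He.
destruct (H1 (eps/2)) as [d1 [Hd1 K1]]; [lra|].
destruct (H2 (eps/2)) as [d2 [Hd2 K2]]; [lra|].
exists (Rmin d1 d2). split; [apply Rmin_pos; lra|].
intros x' y' t' A1 A2 A3 HD.
assert (Hm1 := Rmin_l d1 d2). assert (Hm2 := Rmin_r d1 d2).
assert (E1 : Rabs (g1 x' y' t' - g1 x y t) < eps/2) by (apply K1; auto; lra).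
assert (E2 : Rabs (g2 x' y' t' - g2 x y t) < eps/2) by (apply K2; auto; lra).
replace (g1 x' y' t' + g2 x' y' t' - (g1 x y t + g2 x y t)) with
  ((g1 x' y' t' - g1 x y t) + (g2 x' y' t' - g2 x y t)) by ring.
eapply Rle_lt_trans; [apply Rabs_triang|lra].
Qed.

Lemma cont3_mult D g1 g2 x y t : cont3 D g1 x y t -> cont3 D g2 x y t ->
  cont3 D (fun a b c => g1 a b c * g2 a b c) x y t.
Proof.
intros H1 H2 eps He.
set (M := Rabs (g1 x y t) + Rabs (g2 x y t) + 1).
assert (HM : 0 < M)
  by (unfold M; assert (Q1 := Rabs_pos (g1 x y t)); assert (Q2 := Rabs_pos (g2 x y t)); lra).
set (e := Rmin 1 (eps / (3 * M))).
assert (He0 : 0 < e) by (apply Rmin_pos; [lra | apply Rdiv_lt_0_compat; lra]).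
destruct (H1 e He0) as [d1 [Hd1 K1]].
destruct (H2 e He0) as [d2 [Hd2 K2]].
exists (Rmin d1 d2). split; [apply Rmin_pos; lra|].
intros x' y' t' A1 A2 A3 HD.
assert (Hm1 := Rmin_l d1 d2). assert (Hm2 := Rmin_r d1 d2).
assert (E1 : Rabs (g1 x' y' t' - g1 x y t) < e) by (apply K1; auto; lra).
assert (E2 : Rabs (g2 x' y' t' - g2 x y t) < e) by (apply K2; auto; lra).
set (a := g1 x y t) in *. set (b := g2 x y t) in *.
set (a' := g1 x' y' t') in *. set (b' := g2 x' y' t') in *.
assert (He1 : e <= 1) by apply Rmin_l.
assert (He3 : e * (3 * M) <= eps).
{ assert (He2 : e <= eps / (3 * M)) by apply Rmin_r.
  apply Rmult_le_reg_r with (/ (3*M)); [apply Rinv_0_lt_compat; lra|].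
  rewrite Rmult_assoc, Rinv_r by lra. lra. }
replace (a' * b' - a * b) with ((a' - a) * (b' - b) + (a' - a) * b + a * (b' - b)) by ring.
eapply Rle_lt_trans; [apply Rabs_triang|].
eapply Rle_lt_trans; [apply Rplus_le_compat_r, Rabs_triang|].
rewrite !Rabs_mult.
assert (Ha := Rabs_pos a). assert (Hb := Rabs_pos b).
assert (Ha' := Rabs_pos (a' - a)). assert (Hb' := Rabs_pos (b' - b)).
assert (P1 : Rabs (a' - a) * Rabs (b' - b) <= e * e) by (apply Rmult_le_compat; lra).
assert (P2 : Rabs (a' - a) * Rabs b <= e * Rabs b) by (apply Rmult_le_compat_r; lra).
assert (P3 : Rabs a * Rabs (b' - b) <= Rabs a * e) by (apply Rmult_le_compat_l; lra).
assert (P4 : e * e <= e * 1) by (apply Rmult_le_compat_l; lra).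
unfold M in He3. nra.
Qed.

Lemma cont3_abs D g x y t : cont3 D g x y t -> cont3 D (fun a b c => Rabs (g a b c)) x y t.
Proof.
intros H eps He. destruct (H eps He) as [d [Hd K]]. exists d; split; auto.
intros. eapply Rle_lt_trans; [apply Rabs_triang_inv2|auto].
Qed.

Lemma cont3_time D (phi : R -> R) x y t : continuous phi t ->
  cont3 D (fun _ _ c => phi c) x y t.
Proof.
intros H eps He. destruct (continuous_ed phi t H eps He) as [d [Hd K]].
exists d; split; auto.
Qed.

Lemma cont3_ext D g1 g2 x y t :
  (forall a b c, D c -> g1 a b c = g2 a b c) -> D t -> cont3 D g1 x y t -> cont3 D g2 x y t.
Proof.
intros E Dt H eps He. destruct (H eps He) as [d [Hd K]]. exists d; split; auto.
intros. rewrite <- !E by auto. auto.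
Qed.

Lemma cont3_slice_y D g x y t : cont3 D g x y t -> D t -> continuous (fun z => g x z t) y.
Proof.
intros H Dt. apply ed_continuous. intros eps He. destruct (H eps He) as [d [Hd K]].
exists d; split; auto. intros y' Hy. apply K; auto; rewrite Rminus_diag, Rabs_R0; lra.
Qed.

Lemma cont3_slice_ty g x y t :
  cont3 (fun _ => True) g x y t -> continuity_2d_pt (fun u v => g x v u) t y.
Proof.
intros H eps. destruct (H eps (cond_pos eps)) as [d [Hd K]]. exists (mkposreal d Hd).
intros u v Hu Hv. apply K; auto. rewrite Rminus_diag, Rabs_R0; lra.
Qed.

Lemma cont3_slice_xy D g x y t : cont3 D g x y t -> D t ->
  continuity_2d_pt (fun u v => g u v t) x y.
Proof.
intros H Dt eps. destruct (H eps (cond_pos eps)) as [d [Hd K]]. exists (mkposreal d Hd).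
intros u v Hu Hv. apply K; auto. rewrite Rminus_diag, Rabs_R0; lra.
Qed.

Lemma ex_RInt_cont (f : R -> R) a b :
  (forall z, Rmin a b <= z <= Rmax a b -> continuous f z) -> ex_RInt f a b.
Proof. intros H. apply (@ex_RInt_continuous R_CompleteNormedModule). exact H. Qed.

Lemma ex_RInt_minusR (f g : R -> R) a b :
  ex_RInt f a b -> ex_RInt g a b -> ex_RInt (fun x => f x - g x) a b.
Proof. intros. apply (@ex_RInt_minus R_NormedModule f g a b); auto. Qed.

Lemma RInt_minusR (f g : R -> R) a b : ex_RInt f a b -> ex_RInt g a b ->
  RInt (fun x => f x - g x) a b = RInt f a b - RInt g a b.
Proof. intros. apply (@RInt_minus R_CompleteNormedModule f g a b); auto. Qed.

Lemma RInt_extR (f g : R -> R) a b :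
  (forall x, Rmin a b < x < Rmax a b -> f x = g x) -> RInt f a b = RInt g a b.
Proof. intros. apply (@RInt_ext R_CompleteNormedModule f g a b); auto. Qed.

(* Compactness of the unit square: continuity in the parameters (p,q) at
   (p0,q0), locally uniform around each point of the square, becomes uniform
   over the whole square. *)
Lemma uniform_on_square (g : R -> R -> R -> R -> R) (D : R -> R -> Prop) p0 q0 :
  D p0 q0 ->
  (forall a b, 0 <= a <= 1 -> 0 <= b <= 1 -> forall eps, 0 < eps -> exists d, 0 < d /\
     forall a' b' p q, Rabs (a' - a) < d -> Rabs (b' - b) < d -> Rabs (p - p0) < d ->
       Rabs (q - q0) < d -> D p q -> Rabs (g a' b' p q - g a b p0 q0) < eps) ->
  forall eps, 0 < eps -> exists d, 0 < d /\
    forall a b p q, 0 <= a <= 1 -> 0 <= b <= 1 -> Rabs (p - p0) < d -> Rabs (q - q0) < d ->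
      D p q -> Rabs (g a b p q - g a b p0 q0) < eps.
Proof.
intros HD H eps He.
assert (He2 : 0 < eps / 2) by lra.
pose (Good := fun (ab : R * R) (d : posreal) => 0 <= fst ab <= 1 -> 0 <= snd ab <= 1 ->
  forall a' b' p q, Rabs (a' - fst ab) < d -> Rabs (b' - snd ab) < d -> Rabs (p - p0) < d ->
    Rabs (q - q0) < d -> D p q -> Rabs (g a' b' p q - g (fst ab) (snd ab) p0 q0) < eps / 2).
destruct (choice Good) as [del Hdel].
{ intros [a b]. destruct (classic (0 <= a <= 1 /\ 0 <= b <= 1)) as [[Ha Hb]|Hn].
  - destruct (H a b Ha Hb _ He2) as [d [Hd K]]. exists (mkposreal d Hd). intros _ _. exact K.
  - exists (mkposreal 1 Rlt_0_1). intros Ha Hb. exfalso; tauto. }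
destruct (compactness_value_2d 0 1 0 1 (fun u v => del (u, v))) as [d Hd].
exists d. split; [apply cond_pos|].
intros a b p q Ha Hb Hp Hq Dpq.
specialize (Hd a b Ha Hb).
apply NNPP. intro Hneg. apply Hd. intros [u [v [Hu [Hv [H1 [H2 H3]]]]]]. apply Hneg.
assert (K := Hdel (u, v) Hu Hv). simpl in K.
assert (E1 : Rabs (g a b p q - g u v p0 q0) < eps / 2) by (apply K; auto; lra).
assert (E2 : Rabs (g a b p0 q0 - g u v p0 q0) < eps / 2)
  by (apply K; auto; rewrite Rminus_diag, Rabs_R0; apply cond_pos).
replace (g a b p q - g a b p0 q0) with ((g a b p q - g u v p0 q0) - (g a b p0 q0 - g u v p0 q0)) by ring.
eapply Rle_lt_trans; [apply Rabs_triang|]. rewrite Rabs_Ropp. lra.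
Qed.

Lemma bounded_on_square (g : R -> R -> R -> R) t :
  (forall x y, cont3 (fun _ => True) g x y t) ->
  exists B, forall x y, 0 <= x <= 1 -> 0 <= y <= 1 -> g x y t <= B.
Proof.
intros Hc.
assert (Hy : forall x, exists y, (forall c, 0 <= c <= 1 -> g x c t <= g x y t) /\ 0 <= y <= 1).
{ intros x. apply continuity_ab_maj; [lra|]. intros c _.
  apply continuity_pt_filterlim, (cont3_slice_y (fun _ => True)); auto. }
destruct (choice _ Hy) as [Y HY].
set (m := fun x => g x (Y x) t).
assert (Hm : forall c, continuity_pt m c).
{ intros c. apply continuity_pt_filterlim, ed_continuous. intros eps He.
  destruct (uniform_on_square (fun a b p q => g p b t) (fun _ _ => True) c 0 I)
    with (eps := eps/2) as [d [Hd K]]; [|lra|].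
  { intros a b Ha Hb e He'. destruct (Hc c b e He') as [d [Hd K]]. exists d; split; auto.
    intros a' b' p q H1 H2 H3 H4 _. apply K; auto. rewrite Rminus_diag, Rabs_R0; lra. }
  exists d; split; auto. intros t' Ht'.
  destruct (HY t') as [HY1 HY2]. destruct (HY c) as [HY3 HY4].
  assert (E1 : Rabs (g t' (Y t') t - g c (Y t') t) < eps/2)
    by (apply (K 0 (Y t') t' 0); auto; try lra; rewrite Rminus_diag, Rabs_R0; lra).
  assert (E2 : Rabs (g t' (Y c) t - g c (Y c) t) < eps/2)
    by (apply (K 0 (Y c) t' 0); auto; try lra; rewrite Rminus_diag, Rabs_R0; lra).
  assert (F1 := HY1 (Y c) HY4). assert (F2 := HY3 (Y t') HY2).
  unfold m. apply Rabs_def2 in E1. apply Rabs_def2 in E2. apply Rabs_def1; lra. }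
destruct (continuity_ab_maj m 0 1) as [X [HX1 HX2]]; [lra|intros; apply Hm|].
exists (m X). intros x y Hx Hy'. destruct (HY x) as [HY1 HY2].
specialize (HX1 x Hx). unfold m in *. specialize (HY1 y Hy'). lra.
Qed.

Lemma ex_RInt_slice_y D g x t : (forall y, cont3 D g x y t) -> D t ->
  ex_RInt (fun y => g x y t) 0 1.
Proof. intros H Dt. apply ex_RInt_cont. intros z _. apply (cont3_slice_y D); auto. Qed.

Lemma RInt_y_cont (g : R -> R -> R -> R) (D : R -> Prop) x0 t0 :
  D t0 -> (forall x y t, D t -> cont3 D g x y t) ->
  forall eps, 0 < eps -> exists d, 0 < d /\ forall x t,
    Rabs (x - x0) < d -> Rabs (t - t0) < d -> D t ->
    Rabs (RInt (fun y => g x y t) 0 1 - RInt (fun y => g x0 y t0) 0 1) < eps.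
Proof.
intros Dt0 Hc eps He.
destruct (uniform_on_square (fun a b p q => g p b q) (fun _ q => D q) x0 t0 Dt0)
  with (eps := eps/2) as [d [Hd K]]; [|lra|].
{ intros a b Ha Hb e He'. destruct (Hc x0 b t0 Dt0 e He') as [d [Hd K]]. exists d; split; auto. }
exists d; split; auto. intros x t Hx Ht Dt.
rewrite <- RInt_minusR by (apply ex_RInt_slice_y with D; auto).
eapply Rle_lt_trans.
- apply (abs_RInt_le_const _ 0 1 (eps/2)); [lra| |].
  + apply ex_RInt_minusR; apply ex_RInt_slice_y with D; auto.
  + intros y Hy. left. apply (K 0 y x t); auto; lra.
- lra.
Qed.

Lemma cont3_RInt_y (g : R -> R -> R -> R) (D : R -> Prop) :
  (forall x y t, D t -> cont3 D g x y t) ->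
  forall a b t, D t -> cont3 D (fun _ b' t' => RInt (fun y => g b' y t') 0 1) a b t.
Proof.
intros Hc a b t Dt eps He.
destruct (RInt_y_cont g D b t Dt Hc eps He) as [d [Hd K]].
exists d; split; auto.
Qed.

Lemma periodic_nat (F : R -> R) : (forall x, F (x + 1) = F x) ->
  forall n x, F (x + INR n) = F x.
Proof.
intros H n; induction n as [|n IH]; intros x.
- simpl. rewrite Rplus_0_r. reflexivity.
- rewrite S_INR. replace (x + (INR n + 1)) with ((x + INR n) + 1) by ring. rewrite H. apply IH.
Qed.

Lemma periodic_Z (F : R -> R) : (forall x, F (x + 1) = F x) ->
  forall k x, F (x + IZR k) = F x.
Proof.
intros H k x. destruct (Z_le_dec 0 k) as [Hk|Hk].
- rewrite <- (Z2Nat.id k Hk), <- INR_IZR_INZ. apply periodic_nat; auto.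
- set (n := Z.to_nat (-k)).
  assert (E : IZR k = - INR n).
  { unfold n. rewrite INR_IZR_INZ, Z2Nat.id by lia. rewrite opp_IZR. ring. }
  rewrite E, <- (periodic_nat F H n (x + - INR n)). f_equal. ring.
Qed.

Lemma periodic_reduce (F : R -> R) : (forall x, F (x + 1) = F x) ->
  forall x, exists x', 0 <= x' <= 1 /\ F x = F x'.
Proof.
intros H x. exists (x - IZR (Int_part x)).
destruct (base_Int_part x) as [B1 B2]. split; [lra|].
rewrite <- (periodic_Z F H (Int_part x) (x - IZR (Int_part x))). f_equal. ring.
Qed.

Lemma periodic3_reduce (g : R -> R -> R -> R) : periodic3 g ->
  forall x y t, exists x' y', 0 <= x' <= 1 /\ 0 <= y' <= 1 /\ g x y t = g x' y' t.
Proof.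
intros Hp x y t.
destruct (periodic_reduce (fun z => g z y t) (fun z => proj1 (Hp z y t)) x) as [x' [Hx Ex]].
destruct (periodic_reduce (fun z => g x' z t) (fun z => proj2 (Hp x' z t)) y) as [y' [Hy Ey]].
exists x', y'. simpl in *. split; [auto|]. split; [auto|]. congruence.
Qed.

Lemma Derive_periodic (F : R -> R) x : (forall z, F (z + 1) = F z) -> ex_derive F x ->
  Derive F (x + 1) = Derive F x.
Proof.
intros Hp [l Hl]. rewrite (is_derive_unique _ _ _ Hl). apply is_derive_unique.
apply is_derive_ext with (fun z => F (z - 1)).
{ intros z. rewrite <- (Hp (z - 1)). f_equal. ring. }
assert (Hc := is_derive_comp F (fun z => z - 1) (x + 1) l 1).
assert (Ex : x + 1 - 1 = x) by ring. simpl in Hc. rewrite Ex in Hc.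
assert (E1 : scal (1:R) l = l) by (unfold scal; simpl; unfold mult; simpl; apply Rmult_1_l).
rewrite <- E1. apply Hc; [exact Hl|auto_derive; auto; ring].
Qed.

Lemma Derive_left_min (F : R -> R) c d : ex_derive F c -> 0 < d ->
  (forall z, c - d < z < c -> F c <= F z) -> Derive F c <= 0.
Proof.
intros [l Hl] Hd Hz. rewrite (is_derive_unique _ _ _ Hl).
apply is_derive_Reals in Hl.
apply Rnot_lt_le. intro Hpos.
destruct (Hl l Hpos) as [del Hdel].
set (k := Rmin (del/2) (d/2)).
assert (Hk1 : k <= del/2) by apply Rmin_l. assert (Hk2 : k <= d/2) by apply Rmin_r.
assert (Hk : 0 < k) by (apply Rmin_pos; [assert (Q := cond_pos del); lra | lra]).
assert (Hq : Rabs ((F (c + - k) - F c) / - k - l) < l)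
  by (apply Hdel; [lra|rewrite Rabs_Ropp, Rabs_pos_eq; assert (Q := cond_pos del); lra]).
assert (Hle : F c <= F (c + - k)) by (apply Hz; lra).
assert (Hneg : (F (c + - k) - F c) / - k <= 0).
{ unfold Rdiv. rewrite Rinv_opp.
  assert (0 <= (F (c + - k) - F c) * / k) by (apply Rmult_le_pos; [lra|left; apply Rinv_0_lt_compat; lra]).
  lra. }
apply Rabs_def2 in Hq. lra.
Qed.

Lemma Derive_right_min (F : R -> R) c d : ex_derive F c -> 0 < d ->
  (forall z, c < z < c + d -> F c <= F z) -> 0 <= Derive F c.
Proof.
intros [l Hl] Hd Hz. rewrite (is_derive_unique _ _ _ Hl).
apply is_derive_Reals in Hl.
apply Rnot_lt_le. intro Hneg.
destruct (Hl (-l)) as [del Hdel]; [lra|].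
set (k := Rmin (del/2) (d/2)).
assert (Hk1 : k <= del/2) by apply Rmin_l. assert (Hk2 : k <= d/2) by apply Rmin_r.
assert (Hk : 0 < k) by (apply Rmin_pos; [assert (Q := cond_pos del); lra | lra]).
assert (Hq : Rabs ((F (c + k) - F c) / k - l) < - l)
  by (apply Hdel; [lra|rewrite Rabs_pos_eq; assert (Q := cond_pos del); lra]).
assert (0 <= (F (c + k) - F c) / k)
  by (apply Rmult_le_pos; [assert (F c <= F (c + k)) by (apply Hz; lra); lra|left; apply Rinv_0_lt_compat; lra]).
apply Rabs_def2 in Hq. lra.
Qed.

Lemma Derive_global_min (F : R -> R) c : ex_derive F c -> (forall z, F c <= F z) ->
  Derive F c = 0.
Proof.
intros Hd Hz. apply Rle_antisym.
- apply (Derive_left_min F c 1); auto; lra.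
- apply (Derive_right_min F c 1); auto; lra.
Qed.

Lemma Derive_scaled_min (F : R -> R) s c : s <> 0 -> ex_derive F c ->
  (forall z, s * F c <= s * F z) -> Derive F c = 0.
Proof.
intros Hs Hd Hz.
assert (E : Derive (fun z => s * F z) c = 0)
  by (apply Derive_global_min; [apply ex_derive_scal, Hd|exact Hz]).
rewrite Derive_scal in E. apply Rmult_integral in E as [E|E]; [contradiction|exact E].
Qed.

(* Positivity at a time spreads to a whole time neighbourhood (compactness),
   and nonnegativity passes to the limit from earlier times (continuity). *)
Section FirstTouch.
Variables (w : R -> R -> R -> R) (T1 : R).
Hypotheses (Hper : periodic3 w)
  (Hc : forall x y t, 0 <= t <= T1 -> cont3 (fun s => 0 <= s <= T1) w x y t).

Lemma positive_near_time ts : 0 <= ts <= T1 -> (forall a b, 0 < w a b ts) ->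
  exists d, 0 < d /\ forall a b p, Rabs (p - ts) < d -> 0 <= p <= T1 -> 0 < w a b p.
Proof.
intros Hts Hpos.
assert (Hch : forall ab : R * R, exists d : posreal, forall a b p,
    Rabs (a - fst ab) < d -> Rabs (b - snd ab) < d -> Rabs (p - ts) < d -> 0 <= p <= T1 ->
    0 < w a b p).
{ intros [u v]. simpl. assert (Huv := Hpos u v).
  destruct (Hc u v ts Hts) with (eps := w u v ts / 2) as [d [Hd K]]; [lra|].
  exists (mkposreal d Hd). simpl. intros a b p H1 H2 H3 H4.
  specialize (K a b p H1 H2 H3 H4). apply Rabs_def2 in K. lra. }
destruct (choice _ Hch) as [del Hdel].
destruct (compactness_value_2d 0 1 0 1 (fun u v => del (u, v))) as [d Hd].
exists d. split; [apply cond_pos|]. intros a b p Hp Hp2.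
destruct (periodic3_reduce w Hper a b p) as [a' [b' [Ha' [Hb' E]]]]. rewrite E.
specialize (Hd a' b' Ha' Hb').
apply NNPP. intro Hneg. apply Hd. intros [u [v [Hu [Hv [H1 [H2 H3]]]]]]. apply Hneg.
apply (Hdel (u, v)); simpl; auto. lra.
Qed.

Lemma nonneg_from_left x y ts : 0 < ts <= T1 ->
  (forall r, 0 <= r < ts -> 0 < w x y r) -> 0 <= w x y ts.
Proof.
intros Hts Hleft. apply Rnot_lt_le. intro Hneg.
destruct (Hc x y ts) with (eps := - w x y ts / 2) as [d [Hd K]]; [lra|lra|].
set (r := ts - Rmin d ts / 2).
assert (Hm1 : Rmin d ts <= d) by apply Rmin_l.
assert (Hm2 : Rmin d ts <= ts) by apply Rmin_r.
assert (Hm3 : 0 < Rmin d ts) by (apply Rmin_pos; lra).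
assert (Kr : Rabs (w x y r - w x y ts) < - w x y ts / 2).
{ apply K; try (rewrite Rminus_diag, Rabs_R0; lra).
  - unfold r. rewrite Rabs_left by lra. lra.
  - unfold r. lra. }
assert (0 < w x y r) by (apply Hleft; unfold r; lra).
apply Rabs_def2 in Kr. lra.
Qed.

Lemma positive_until_first_touch :
  (forall x y, 0 < w x y 0) ->
  (forall x y t, 0 < t < T1 -> w x y t = 0 -> (forall x' y', 0 <= w x' y' t) ->
     (forall s x' y', 0 <= s < t -> 0 < w x' y' s) -> False) ->
  forall x y t, 0 <= t < T1 -> 0 < w x y t.
Proof.
intros H0 Hhyp x y t0 Ht0.
apply NNPP; intro Hn. apply Rnot_lt_le in Hn.
set (P := fun s => 0 <= s <= t0 /\ forall r x' y', 0 <= r <= s -> 0 < w x' y' r).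
assert (HP0 : P 0).
{ split; [lra|]. intros r x' y' Hr. replace r with 0 by lra. apply H0. }
assert (Hb : bound P) by (exists t0; intros s [Hs _]; lra).
destruct (completeness P Hb (ex_intro _ 0 HP0)) as [ts [Hub Hlub]].
assert (Hts0 : 0 <= ts) by (apply Hub; exact HP0).
assert (Hts1 : ts <= t0) by (apply Hlub; intros s [Hs _]; lra).
assert (Hbefore : forall r x' y', 0 <= r < ts -> 0 < w x' y' r).
{ intros r x' y' Hr. apply NNPP; intro Hneg.
  assert (ts <= r); [|lra].
  apply Hlub. intros s [Hs Hs']. apply Rnot_lt_le. intro Hsr. apply Hneg, Hs'. lra. }
(* w vanishes or is negative somewhere at time ts, else P extends past ts *)
assert (Hzero : exists xs ys, w xs ys ts <= 0).
{ apply NNPP; intro Hneg.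
  assert (Hpos : forall a b, 0 < w a b ts).
  { intros a b. apply Rnot_le_lt. intro. apply Hneg. exists a, b; auto. }
  destruct (positive_near_time ts ltac:(lra) Hpos) as [d [Hd Hnear]].
  destruct (Req_dec ts t0) as [Heq|Hne].
  - assert (0 < w x y t0); [|lra].
    apply Hnear; [rewrite Heq, Rminus_diag, Rabs_R0; exact Hd|lra].
  - set (s' := Rmin (ts + d / 2) t0).
    assert (Hs1 : s' <= ts + d/2) by apply Rmin_l.
    assert (Hs2 : s' <= t0) by apply Rmin_r.
    assert (Hs3 : ts < s') by (unfold s'; apply Rmin_glb_lt; lra).
    assert (HPs : P s').
    { split; [lra|]. intros r x' y' Hr.
      destruct (Rlt_le_dec r ts) as [Hrt|Hrt]; [apply Hbefore; lra|].
      apply Hnear; [rewrite Rabs_pos_eq by lra; lra|lra]. }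
    assert (s' <= ts) by (apply Hub; exact HPs). lra. }
destruct Hzero as [xs [ys Hxs]].
assert (Htsp : 0 < ts).
{ destruct Hts0 as [Hl|He]; [exact Hl|]. rewrite <- He in Hxs. specialize (H0 xs ys). lra. }
assert (Hnn : forall x' y', 0 <= w x' y' ts)
  by (intros x' y'; apply nonneg_from_left; [lra|intros; apply Hbefore; lra]).
apply (Hhyp xs ys ts); auto; [lra|]. specialize (Hnn xs ys). lra.
Qed.

End FirstTouch.

Lemma cont3_of_reg T g x y t : classical_reg T g -> 0 <= t <= T ->
  cont3 (fun s => 0 <= s <= T) g x y t.
Proof. intros [H _] Ht. apply cont3_of_filterlim, H, Ht. Qed.

Lemma cont3_pd_of_reg T g d x y t : classical_reg T g -> 0 < t < T ->
  cont3 (fun s => 0 < s < T) (pd d g) x y t.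
Proof. intros [_ [_ H]] Ht. apply cont3_of_filterlim, H, Ht. Qed.

(* For s = 1 (resp. s = -1) this says that the
   barrier -phi stays below (resp. phi stays above) the solution g, provided
   the inequality holds at t = 0 and the barrier is a strict sub- (resp.
   super-) solution at every touching point, where the spatial gradient of g
   vanishes. *)
Lemma comparison_principle (T T1 s : R) (g : R -> R -> R -> R) (phi dphi : R -> R) :
  0 < T1 <= T -> classical_reg T g -> periodic3 g -> (s = 1 \/ s = -1) ->
  (forall t, is_derive phi t (dphi t)) ->
  (forall x y, 0 < s * g x y 0 + phi 0) ->
  (forall x y t, 0 < t < T1 -> s * g x y t + phi t = 0 -> dx g x y t = 0 -> dy g x y t = 0 ->
      0 < s * dt g x y t + dphi t) ->
  forall x y t, 0 <= t <= T1 -> 0 <= s * g x y t + phi t.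
Proof.
intros HT Hreg Hper Hs Hphi H0 Hhyp.
set (w := fun x y t => s * g x y t + phi t).
assert (Hs0 : s <> 0) by (destruct Hs; lra).
assert (Hwc : forall x y t, 0 <= t <= T1 -> cont3 (fun s => 0 <= s <= T1) w x y t).
{ intros x y t Ht. apply cont3_plus.
  - apply cont3_mult; [apply cont3_time, continuous_const|].
    apply cont3_weaken with (fun s => 0 <= s <= T); [intros; lra|].
    apply cont3_of_reg; auto; lra.
  - apply cont3_time. apply (@ex_derive_continuous R_AbsRing R_NormedModule).
    exists (dphi t). apply Hphi. }
assert (Hwp : periodic3 w).
{ intros x y t. unfold w. destruct (Hper x y t) as [E1 E2]. rewrite E1, E2. auto. }
assert (Hstrict : forall x y t, 0 <= t < T1 -> 0 < w x y t).
{ apply positive_until_first_touch; auto.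
  intros x y t Ht Hw0 Hmin Hleft.
  assert (Hex : forall dd, ex_pd dd g x y t) by (intros dd; apply Hreg; lra).
  (* at a spatial minimum the spatial gradient vanishes *)
  assert (Hdx : dx g x y t = 0).
  { apply (Derive_scaled_min (fun z => g z y t) s x Hs0 (Hex Defs.Dx)).
    intros z. specialize (Hmin z y). unfold w in Hw0, Hmin. lra. }
  assert (Hdy : dy g x y t = 0).
  { apply (Derive_scaled_min (fun z => g x z t) s y Hs0 (Hex Defs.Dy)).
    intros z. specialize (Hmin x z). unfold w in Hw0, Hmin. lra. }
  (* and the time derivative at a first zero is nonpositive *)
  assert (Hd1 : is_derive (fun z => s * g x y z + phi z) t (s * dt g x y t + dphi t)).
  { apply (is_derive_plus (fun z => s * g x y z) phi).
    - apply (is_derive_scal (fun z => g x y z)). apply Derive_correct, (Hex Defs.Dt).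
    - apply Hphi. }
  assert (Hd2 : Derive (fun z => s * g x y z + phi z) t <= 0).
  { apply Derive_left_min with t; [eexists; exact Hd1|lra|].
    intros z Hz. change (w x y t <= w x y z). rewrite Hw0. left. apply Hleft. lra. }
  assert (Hdt : s * dt g x y t + dphi t <= 0)
    by (rewrite <- (is_derive_unique _ _ _ Hd1); exact Hd2).
  specialize (Hhyp x y t Ht Hw0 Hdx Hdy). lra. }
intros x y t Ht. destruct (Rlt_le_dec t T1) as [Hlt|Hge].
- left. apply Hstrict. lra.
- change (0 <= w x y t). apply nonneg_from_left with T1; auto; [lra|].
  intros r Hr. apply Hstrict. lra.
Qed.

Lemma LinfOmega_spec (G : R -> R -> R) :
  (exists B, forall x y, 0 <= x <= 1 -> 0 <= y <= 1 -> Rabs (G x y) <= B) ->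
  (forall x y, 0 <= x <= 1 -> 0 <= y <= 1 -> Rabs (G x y) <= LinfOmega G) /\
  (forall B, (forall x y, 0 <= x <= 1 -> 0 <= y <= 1 -> Rabs (G x y) <= B) ->
     LinfOmega G <= B).
Proof.
intros [B HB]. unfold LinfOmega.
set (E := fun r => exists x y, 0 <= x <= 1 /\ 0 <= y <= 1 /\ r = Rabs (G x y)).
destruct (Lub_Rbar_correct E) as [Hub Hlub].
assert (Hle : forall B', (forall x y, 0 <= x <= 1 -> 0 <= y <= 1 -> Rabs (G x y) <= B') ->
  Rbar_le (Lub_Rbar E) (Finite B')).
{ intros B' HB'. apply Hlub. intros r [x [y [Hx [Hy Er]]]]. subst r. apply HB'; auto. }
assert (Hfin : exists l, Lub_Rbar E = Finite l).
{ assert (H1 := Hub _ (ex_intro _ 0 (ex_intro _ 0 (conj (conj (Rle_refl 0) Rle_0_1)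
    (conj (conj (Rle_refl 0) Rle_0_1) eq_refl))))).
  assert (H2 := Hle B HB).
  destruct (Lub_Rbar E) as [l| |]; simpl in *; try tauto. exists l; auto. }
destruct Hfin as [l Hl]. rewrite Hl. simpl. split.
- intros x y Hx Hy. assert (H1 : E (Rabs (G x y))) by (exists x, y; auto).
  specialize (Hub _ H1). rewrite Hl in Hub. exact Hub.
- intros B' HB'. specialize (Hle B' HB'). rewrite Hl in Hle. exact Hle.
Qed.

Lemma smooth3_ex_pd d (u : R -> R -> R -> R) x y t : smooth3 u -> ex_pd d u x y t.
Proof. intros H. exact (proj2 (H nil) d x y t). Qed.

Lemma smooth3_cont3 (u : R -> R -> R -> R) x y t : smooth3 u -> cont3 (fun _ => True) u x y t.
Proof. intros H. apply cont3_of_continuous. exact (proj1 (H nil) (x, y, t)). Qed.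

Lemma smooth3_cont3_pd d (u : R -> R -> R -> R) x y t : smooth3 u ->
  cont3 (fun _ => True) (pd d u) x y t.
Proof. intros H. apply cont3_of_continuous. exact (proj1 (H (cons d nil)) (x, y, t)). Qed.

Section Velocity.
Variables (u1 u2 : R -> R -> R -> R).
Hypotheses (Hu1 : smooth3 u1) (Hu2 : smooth3 u2) (Hp1 : periodic3 u1) (Hp2 : periodic3 u2).

Lemma divu_cont3 x y t : cont3 (fun _ => True) (divu u1 u2) x y t.
Proof. apply cont3_plus; [apply (smooth3_cont3_pd Defs.Dx)|apply (smooth3_cont3_pd Defs.Dy)]; auto. Qed.

Lemma divu_periodic : periodic3 (divu u1 u2).
Proof.
intros x y t. unfold divu, dx, dy. split.
- rewrite (Derive_periodic (fun z => u1 z y t)); [|intros z; apply Hp1|apply (smooth3_ex_pd Defs.Dx u1 x y t Hu1)].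
  f_equal. apply Derive_ext. intros z. apply Hp2.
- rewrite (Derive_periodic (fun z => u2 x z t)); [|intros z; apply Hp2|apply (smooth3_ex_pd Defs.Dy u2 x y t Hu2)].
  f_equal. apply Derive_ext. intros z. apply Hp1.
Qed.

Definition Linf_divu (t : R) : R := LinfOmega (fun x y => divu u1 u2 x y t).

Lemma divu_bounded t : exists B, forall x y, 0 <= x <= 1 -> 0 <= y <= 1 ->
  Rabs (divu u1 u2 x y t) <= B.
Proof.
apply (bounded_on_square (fun a b c => Rabs (divu u1 u2 a b c))).
intros. apply cont3_abs, divu_cont3.
Qed.

Lemma Linf_divu_ge x y t : Rabs (divu u1 u2 x y t) <= Linf_divu t.
Proof.
destruct (periodic3_reduce _ divu_periodic x y t) as [x' [y' [Hx [Hy E]]]]. rewrite E.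
apply (proj1 (LinfOmega_spec _ (divu_bounded t))); auto.
Qed.

Lemma Linf_divu_nonneg t : 0 <= Linf_divu t.
Proof. eapply Rle_trans; [apply Rabs_pos|apply (Linf_divu_ge 0 0 t)]. Qed.

Lemma Linf_divu_continuous t0 : continuous Linf_divu t0.
Proof.
apply ed_continuous. intros eps He.
destruct (uniform_on_square (fun a b p q => divu u1 u2 a b p) (fun _ _ => True) t0 0 I)
  with (eps := eps/2) as [d [Hd K]]; [|lra|].
{ intros a b Ha Hb e He'. destruct (divu_cont3 a b t0 e He') as [d [Hd K]]. exists d; split; auto. }
exists d; split; auto. intros t' Ht'.
assert (Hclose : forall x y, 0 <= x <= 1 -> 0 <= y <= 1 ->
  Rabs (divu u1 u2 x y t' - divu u1 u2 x y t0) < eps/2)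
  by (intros; apply (K x y t' 0); auto; rewrite Rminus_diag, Rabs_R0; lra).
assert (A1 : Linf_divu t' <= Linf_divu t0 + eps/2).
{ apply (proj2 (LinfOmega_spec _ (divu_bounded t'))). intros x y Hx Hy.
  assert (K1 := Hclose x y Hx Hy). assert (F := Linf_divu_ge x y t0).
  assert (G := Rabs_triang_inv (divu u1 u2 x y t') (divu u1 u2 x y t0)). lra. }
assert (A2 : Linf_divu t0 <= Linf_divu t' + eps/2).
{ apply (proj2 (LinfOmega_spec _ (divu_bounded t0))). intros x y Hx Hy.
  assert (K1 := Hclose x y Hx Hy). assert (F := Linf_divu_ge x y t').
  assert (G := Rabs_triang_inv (divu u1 u2 x y t0) (divu u1 u2 x y t')).
  rewrite Rabs_minus_sym in G. lra. }
apply Rabs_def1; lra.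
Qed.

Definition Eweight (t : R) : R := exp (RInt Linf_divu 0 t).

Lemma Linf_divu_ex_RInt a b : ex_RInt Linf_divu a b.
Proof. apply ex_RInt_cont. intros; apply Linf_divu_continuous. Qed.

Lemma Eweight_derive t : is_derive Eweight t (Linf_divu t * Eweight t).
Proof.
assert (H1 : is_derive (fun s => RInt Linf_divu 0 s) t (Linf_divu t)).
{ apply (is_derive_RInt Linf_divu (fun s => RInt Linf_divu 0 s) 0 t).
  - exists (mkposreal 1 Rlt_0_1). intros b _.
    apply (@RInt_correct R_CompleteNormedModule), Linf_divu_ex_RInt.
  - apply Linf_divu_continuous. }
assert (H2 : is_derive exp (RInt Linf_divu 0 t) (exp (RInt Linf_divu 0 t)))
  by (auto_derive; auto; ring).
assert (H3 := is_derive_comp exp (fun s => RInt Linf_divu 0 s) t _ _ H2 H1).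
unfold Eweight. simpl in H3. unfold scal in H3; simpl in H3; unfold mult in H3; simpl in H3.
exact H3.
Qed.

Lemma Eweight_pos t : 0 < Eweight t.
Proof. apply exp_pos. Qed.

Lemma Eweight_0 : Eweight 0 = 1.
Proof. unfold Eweight. rewrite RInt_point. apply exp_0. Qed.

Lemma Eweight_mono s t : s <= t -> Eweight s <= Eweight t.
Proof.
intros Hst. unfold Eweight.
assert (E := RInt_Chasles Linf_divu 0 s t (Linf_divu_ex_RInt 0 s) (Linf_divu_ex_RInt s t)).
simpl in E. unfold plus in E; simpl in E.
assert (P : 0 <= RInt Linf_divu s t)
  by (apply RInt_ge_0; auto; [apply Linf_divu_ex_RInt|intros; apply Linf_divu_nonneg]).
destruct (Req_dec (RInt Linf_divu 0 s) (RInt Linf_divu 0 t)) as [Heq|Hne].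
- rewrite Heq; lra.
- left. apply exp_increasing. lra.
Qed.

Lemma Eweight_ge1 t : 0 <= t -> 1 <= Eweight t.
Proof. intros Ht. rewrite <- Eweight_0. apply Eweight_mono; auto. Qed.

End Velocity.

Lemma pos_ge0 p : 0 <= Defs.pos p.
Proof. unfold Defs.pos. apply Rmax_r. Qed.

Lemma pos_neg p : p <= 0 -> Defs.pos p = 0.
Proof. intros; unfold Defs.pos; apply Rmax_right; auto. Qed.

Lemma frac01 a b : 0 <= a -> 0 < b -> 0 <= a / (a + b) <= 1.
Proof.
intros Ha Hb. split; [apply Rdiv_le_0_compat; lra|].
apply Rmult_le_reg_r with (a + b); [lra|].
unfold Rdiv. rewrite Rmult_assoc, Rinv_l by lra. lra.
Qed.

Lemma abs_le_range_bound fl fu z : fl <= z <= fu -> Rabs z <= Rabs fu + Rabs fl.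
Proof.
intros [H1 H2]. apply Rabs_le.
assert (Q1 := Rabs_pos fu). assert (Q2 := Rabs_pos fl).
assert (Q3 := Rle_abs fu). assert (Q4 := Rle_abs (-fl)). rewrite Rabs_Ropp in Q4. lra.
Qed.

Lemma chi_h_01 nu h : 0 < nu -> 0 <= chi_h nu h <= 1.
Proof. intros. unfold chi_h. apply frac01; [apply pos_ge0|auto]. Qed.

Lemma S_h_nonpos_h f om nu h A : 0 < nu -> h <= 0 -> S_h f om nu h A = 0.
Proof. intros. unfold S_h, chi_h. rewrite pos_neg by auto. unfold Rdiv. ring. Qed.

Lemma S_h_bound f fl fu om nu h A : 0 < nu -> (forall z, fl <= f z <= fu) -> 0 <= A <= 1 ->
  Rabs (S_h f om nu h A) <= Rabs fu + Rabs fl.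
Proof.
intros Hnu Hf HA. unfold S_h.
set (K := Rabs fu + Rabs fl).
set (z := Defs.pos h / (Defs.pos A + om)).
assert (B1 := abs_le_range_bound _ _ _ (Hf z)). assert (B2 := abs_le_range_bound _ _ _ (Hf 0)).
fold K in B1, B2.
assert (H1 : Rabs (f z * A + (1 - A) * f 0) <= K).
{ eapply Rle_trans; [apply Rabs_triang|]. rewrite !Rabs_mult.
  rewrite (Rabs_pos_eq A), (Rabs_pos_eq (1 - A)) by lra.
  assert (Rabs (f z) * A <= K * A) by (apply Rmult_le_compat_r; lra).
  assert ((1 - A) * Rabs (f 0) <= (1 - A) * K) by (apply Rmult_le_compat_l; lra). nra. }
rewrite Rabs_mult. destruct (chi_h_01 nu h Hnu) as [C1 C2].
rewrite (Rabs_pos_eq (chi_h nu h)) by lra.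
assert (Q := Rabs_pos (f z * A + (1 - A) * f 0)). nra.
Qed.

Lemma sqrt_gt_self S om : 0 < om -> S < sqrt (S ^ 2 + om ^ 2).
Proof.
intros Hom. assert (Hp := sqrt_pos (S ^ 2 + om ^ 2)).
destruct (Rlt_le_dec S 0) as [Hs|Hs]; [lra|].
rewrite <- (sqrt_pow2 S Hs) at 1. apply sqrt_lt_1_alt.
split; [nra|]. assert (0 < om ^ 2) by (apply pow_lt; lra). lra.
Qed.

Lemma S_A_nonneg_below f h0 om nu h A : 0 < om -> 0 < nu -> 0 < h0 -> A <= 0 ->
  0 <= S_A f h0 om nu h A.
Proof.
intros Hom Hnu Hh0 HA. unfold S_A.
set (Sv := S_h f om nu h A).
assert (Hq := sqrt_gt_self Sv om Hom).
assert (P1 : 0 <= Defs.pos (f 0) / (h0 + nu) * (1 - A))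
  by (apply Rmult_le_pos; [apply Rdiv_le_0_compat; [apply pos_ge0|lra]|lra]).
assert (P2 : 0 <= - A / (2 * Defs.pos h + nu))
  by (apply Rdiv_le_0_compat; [lra|assert (Q := pos_ge0 h); lra]).
assert (P3 : 0 <= - A / (2 * Defs.pos h + nu) * ((sqrt (Sv ^ 2 + om ^ 2) - Sv) / 2))
  by (apply Rmult_le_pos; lra).
unfold Rdiv in *. rewrite <- Ropp_mult_distr_l in P3. lra.
Qed.

Lemma S_A_neg_above f h0 om nu h A : 0 < om -> 0 < nu -> 0 < h0 -> 1 < A ->
  S_A f h0 om nu h A < 0.
Proof.
intros Hom Hnu Hh0 HA. unfold S_A.
set (Sv := S_h f om nu h A).
assert (Hq := sqrt_gt_self Sv om Hom).
assert (P1 : Defs.pos (f 0) / (h0 + nu) * (1 - A) <= 0).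
{ assert (0 <= Defs.pos (f 0) / (h0 + nu)) by (apply Rdiv_le_0_compat; [apply pos_ge0|lra]). nra. }
assert (P2 : 0 < A / (2 * Defs.pos h + nu))
  by (apply Rdiv_lt_0_compat; [lra|assert (Q := pos_ge0 h); lra]).
assert (0 < A / (2 * Defs.pos h + nu) * ((sqrt (Sv ^ 2 + om ^ 2) - Sv) / 2))
  by (apply Rmult_lt_0_compat; lra).
lra.
Qed.

Lemma chi_A_above om A : 0 < om -> 1 <= A -> chi_A om A = 1.
Proof. intros. unfold chi_A. rewrite pos_neg by lra. unfold Rdiv. ring. Qed.

Lemma one_minus_chi_A_01 om A : 0 < om -> 0 <= 1 - chi_A om A <= 1.
Proof.
intros. unfold chi_A.
replace (1 - (1 - Defs.pos (1 - A) / (Defs.pos (1 - A) + om)))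
  with (Defs.pos (1 - A) / (Defs.pos (1 - A) + om)) by ring.
apply frac01; [apply pos_ge0|auto].
Qed.

(* Barriers are perturbed by eps > 0 to make them strict; this lemma removes
   the perturbation. *)
Lemma nonneg_of_perturbed a c : (forall eps, 0 < eps -> 0 <= a + eps * c) -> 0 <= a.
Proof.
intros H. apply Rnot_lt_le. intro Ha.
set (e := - a / (2 * (Rabs c + 1))).
assert (Hc := Rabs_pos c).
assert (He : 0 < e) by (unfold e; apply Rdiv_lt_0_compat; lra).
specialize (H e He).
assert (E : e * (2 * (Rabs c + 1)) = - a) by (unfold e; field; lra).
assert (e * c <= e * Rabs c) by (apply Rmult_le_compat_l; [lra|apply Rle_abs]).
nra.
Qed.

Lemma divflux_at_critical (g u1 u2 : R -> R -> R -> R) x y t :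
  ex_derive (fun z => g z y t) x -> ex_derive (fun z => g x z t) y ->
  ex_derive (fun z => u1 z y t) x -> ex_derive (fun z => u2 x z t) y ->
  dx g x y t = 0 -> dy g x y t = 0 ->
  divflux g u1 u2 x y t = g x y t * divu u1 u2 x y t.
Proof.
intros H1 H2 H3 H4 E1 E2. unfold divflux, divu. unfold dx, dy in *.
rewrite (Derive_mult (fun z => g z y t) (fun z => u1 z y t)) by auto.
rewrite (Derive_mult (fun z => g x z t) (fun z => u2 x z t)) by auto.
rewrite E1, E2. ring.
Qed.

Lemma is_derive_affine a b t : is_derive (fun s : R => a * s + b) t a.
Proof. auto_derive; auto; ring. Qed.

Lemma is_derive_shift c t : is_derive (fun s : R => c + s) t 1.
Proof. auto_derive; auto; ring. Qed.

Lemma is_derive_scalR (f : R -> R) x a c :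
  is_derive f x a -> is_derive (fun z => c * f z) x (c * a).
Proof. intros. apply (is_derive_scal f x c a); auto. Qed.

Lemma is_derive_multR (f g : R -> R) x a b : is_derive f x a -> is_derive g x b ->
  is_derive (fun z => f z * g z) x (a * g x + f x * b).
Proof. intros. apply (is_derive_mult f g x a b); auto. intros; apply Rmult_comm. Qed.

(* A mean value inequality needing differentiability only inside (0,t) and
   one-sided continuity at the endpoints, as is the case for the mass. *)
Lemma mean_value_bound (M dM : R -> R) (K t : R) : 0 <= K -> 0 < t ->
  (forall s, 0 < s < t -> is_derive M s (dM s)) ->
  (forall s, 0 < s < t -> Rabs (dM s) <= K) ->
  (forall s, s = 0 \/ s = t -> forall eps, 0 < eps -> exists d, 0 < d /\
     forall r, Rabs (r - s) < d -> 0 <= r <= t -> Rabs (M r - M s) < eps) ->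
  Rabs (M t - M 0) <= K * t.
Proof.
intros HK Ht Hder Hbnd Hcont.
apply Rnot_lt_le. intro Hgap.
set (g := Rabs (M t - M 0) - K * t).
assert (Hg : 0 < g) by (unfold g; lra).
destruct (Hcont t (or_intror eq_refl) (g / 3)) as [d1 [Hd1 K1]]; [lra|].
destruct (Hcont 0 (or_introl eq_refl) (g / 3)) as [d2 [Hd2 K2]]; [lra|].
set (eta := Rmin (Rmin d1 d2) (t / 2) / 2).
assert (Q1 := Rmin_l (Rmin d1 d2) (t / 2)). assert (Q2 := Rmin_r (Rmin d1 d2) (t / 2)).
assert (Q3 := Rmin_l d1 d2). assert (Q4 := Rmin_r d1 d2).
assert (Hq : 0 < Rmin (Rmin d1 d2) (t / 2)) by (repeat apply Rmin_pos; lra).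
assert (He1 : 0 < eta) by (unfold eta; lra).
assert (He2 : eta < t - eta) by (unfold eta; lra).
assert (A1 : Rabs (M (t - eta) - M t) < g / 3)
  by (apply K1; [rewrite Rabs_left by lra; unfold eta; lra|lra]).
assert (A2 : Rabs (M eta - M 0) < g / 3)
  by (apply K2; [rewrite Rminus_0_r, Rabs_pos_eq by lra; unfold eta; lra|lra]).
assert (A3 : Rabs (M (t - eta) - M eta) <= K * t).
{ destruct (MVT_gen M eta (t - eta) dM) as [c [Hc Ec]].
  - intros s Hs. rewrite Rmin_left, Rmax_right in Hs by lra. apply Hder. lra.
  - intros s Hs. rewrite Rmin_left, Rmax_right in Hs by lra.
    apply continuity_pt_filterlim, (@ex_derive_continuous R_AbsRing R_NormedModule).
    eexists. apply Hder. lra.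
  - rewrite Rmin_left, Rmax_right in Hc by lra. rewrite Ec, Rabs_mult.
    assert (B := Hbnd c ltac:(lra)).
    rewrite (Rabs_pos_eq (t - eta - eta)) by lra.
    assert (Rabs (dM c) * (t - eta - eta) <= K * (t - eta - eta)) by (apply Rmult_le_compat_r; lra).
    assert (K * (t - eta - eta) <= K * t) by (apply Rmult_le_compat_l; lra). lra. }
assert (Tri : Rabs (M t - M 0) <=
  Rabs (M (t - eta) - M t) + Rabs (M (t - eta) - M eta) + Rabs (M eta - M 0)).
{ replace (M t - M 0) with (- (M (t - eta) - M t) + (M (t - eta) - M eta) + (M eta - M 0)) by ring.
  eapply Rle_trans; [apply Rabs_triang|]. rewrite <- (Rabs_Ropp (M (t - eta) - M t)).
  apply Rplus_le_compat_r, Rabs_triang. }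
unfold g in *. lra.
Qed.

Lemma open_interval_ball a b t : a < t < b ->
  exists d, 0 < d /\ forall z, Rabs (z - t) < d -> a < z < b.
Proof.
intros Ht. exists (Rmin (t - a) (b - t)). split; [apply Rmin_pos; lra|].
intros z Hz. assert (Q1 := Rmin_l (t - a) (b - t)). assert (Q2 := Rmin_r (t - a) (b - t)).
apply Rabs_def2 in Hz. lra.
Qed.

Lemma open_interval_locally a b t : a < t < b -> locally t (fun z => a < z < b).
Proof.
intros Ht. destruct (open_interval_ball a b t Ht) as [d [Hd K]].
exists (mkposreal _ Hd). intros z Hz. apply K, ball_R_iff, Hz.
Qed.

Section Model.
Variables (om nu T h0 fl fu hl hu : R) (f : R -> R)
  (u1 u2 h A : R -> R -> R -> R) (hin Ain : R -> R -> R).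
Hypotheses (Hom : 0 < om < 1) (Hnu : 0 < nu < 1) (HT : 0 < T) (Hh0 : 0 < h0)
  (Hf : forall z, fl <= f z <= fu)
  (Hu1 : smooth3 u1) (Hu2 : smooth3 u2) (Hp1 : periodic3 u1) (Hp2 : periodic3 u2)
  (Hph : periodic3 h) (HpA : periodic3 A) (Hrh : classical_reg T h) (HrA : classical_reg T A)
  (Hin_h : forall x y, h x y 0 = hin x y) (Hin_A : forall x y, A x y 0 = Ain x y)
  (Hpde_h : forall x y t, 0 < t < T ->
     dt h x y t + divflux h u1 u2 x y t = S_h f om nu (h x y t) (A x y t))
  (Hpde_A : forall x y t, 0 < t < T ->
     dt A x y t + divflux A u1 u2 x y t =
       S_A f h0 om nu (h x y t) (A x y t)
       + A x y t * divu u1 u2 x y t * chi_A om (A x y t))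
  (Hhl : 0 < hl) (Hhin : forall x y, hl <= hin x y <= hu) (HAin : forall x y, 0 <= Ain x y <= 1).

Let K := Rabs fu + Rabs fl.
Let L := Linf_divu u1 u2.
Let E := Eweight u1 u2.

Lemma K_nonneg : 0 <= K.
Proof. unfold K. assert (Q := Rabs_pos fu); assert (Q2 := Rabs_pos fl); lra. Qed.

Lemma L_bounds x y t : - L t <= divu u1 u2 x y t <= L t.
Proof. apply Rabs_le_between, Linf_divu_ge; auto. Qed.

Lemma E_derive t : is_derive E t (L t * E t).
Proof. apply Eweight_derive; auto. Qed.

Lemma E_mono s t : s <= t -> E s <= E t.
Proof. apply Eweight_mono; auto. Qed.

Lemma E_ge1 t : 0 <= t -> 1 <= E t.
Proof. apply Eweight_ge1; auto. Qed.

Lemma h_eq_at_critical x y t : 0 < t < T -> dx h x y t = 0 -> dy h x y t = 0 ->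
  dt h x y t = S_h f om nu (h x y t) (A x y t) - h x y t * divu u1 u2 x y t.
Proof.
intros Ht E1 E2. rewrite <- (Hpde_h x y t Ht).
rewrite (divflux_at_critical h u1 u2 x y t); auto; [ring| | | |].
- apply (proj1 (proj2 Hrh) Defs.Dx); auto.
- apply (proj1 (proj2 Hrh) Defs.Dy); auto.
- apply (smooth3_ex_pd Defs.Dx u1); auto.
- apply (smooth3_ex_pd Defs.Dy u2); auto.
Qed.

Lemma A_eq_at_critical x y t : 0 < t < T -> dx A x y t = 0 -> dy A x y t = 0 ->
  dt A x y t = S_A f h0 om nu (h x y t) (A x y t)
       - A x y t * divu u1 u2 x y t * (1 - chi_A om (A x y t)).
Proof.
intros Ht E1 E2. assert (Q := Hpde_A x y t Ht).
rewrite (divflux_at_critical A u1 u2 x y t) in Q; auto; [lra| | | |].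
- apply (proj1 (proj2 HrA) Defs.Dx); auto.
- apply (proj1 (proj2 HrA) Defs.Dy); auto.
- apply (smooth3_ex_pd Defs.Dx u1); auto.
- apply (smooth3_ex_pd Defs.Dy u2); auto.
Qed.

Lemma small_barrier_derive eps t : is_derive (fun s => eps * ((1 + s) * E s)) t
   (eps * (1 * E t + (1 + t) * (L t * E t))).
Proof. apply is_derive_scalR, is_derive_multR; [apply is_derive_shift|apply E_derive]. Qed.

Lemma A_nonneg x y t : 0 <= t <= T -> 0 <= A x y t.
Proof.
intros Ht. apply nonneg_of_perturbed with ((1 + t) * E t). intros eps He.
replace (A x y t + eps * ((1 + t) * E t)) with (1 * A x y t + eps * ((1 + t) * E t)) by ring.
apply (comparison_principle T T 1 A _ _ ltac:(lra) HrA HpA (or_introl eq_refl)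
  (small_barrier_derive eps)); auto.
- intros x' y'. rewrite Hin_A. unfold E. rewrite Eweight_0. specialize (HAin x' y'). lra.
- intros x' y' s Hs Hz E1 E2. rewrite (A_eq_at_critical x' y' s Hs E1 E2).
  set (a := A x' y' s) in *. set (D := divu u1 u2 x' y' s).
  set (c := 1 - chi_A om a).
  assert (Hc := one_minus_chi_A_01 om a (proj1 Hom)). fold c in Hc.
  assert (HE := Eweight_pos u1 u2 s : 0 < E s).
  assert (HL := L_bounds x' y' s). fold D in HL.
  assert (Ha : a = - (eps * ((1 + s) * E s))) by lra.
  assert (Hpos : 0 < eps * ((1 + s) * E s))
    by (apply Rmult_lt_0_compat; [lra|apply Rmult_lt_0_compat; lra]).
  assert (HSA : 0 <= S_A f h0 om nu (h x' y' s) a) by (apply S_A_nonneg_below; lra).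
  assert (HDc : - L s <= D * c).
  { destruct (Rle_dec 0 D).
    - assert (0 <= D * c) by (apply Rmult_le_pos; lra). lra.
    - assert (D * c >= D) by nra. lra. }
  assert (HX : (- a) * (D * c) >= (- a) * (- L s)) by (apply Rmult_ge_compat_l; lra).
  assert (0 < eps * E s) by (apply Rmult_lt_0_compat; lra).
  replace (1 * (S_A f h0 om nu (h x' y' s) a - a * D * c) + eps * (1 * E s + (1 + s) * (L s * E s)))
    with (S_A f h0 om nu (h x' y' s) a + (- a) * (D * c) + eps * E s + (eps * ((1 + s) * E s)) * L s)
    by ring.
  rewrite Ha in HX. nra.
Qed.

Lemma A_le1 x y t : 0 <= t <= T -> A x y t <= 1.
Proof.
intros Ht. cut (0 <= 1 - A x y t); [lra|]. apply nonneg_of_perturbed with 1. intros eps He.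
replace (1 - A x y t + eps * 1) with (-1 * A x y t + (1 + eps)) by ring.
apply (comparison_principle T T (-1) A (fun _ => 1 + eps) (fun _ => 0) ltac:(lra) HrA HpA
  (or_intror eq_refl)); auto.
- intros s; apply (is_derive_const (1 + eps) s).
- intros x' y'. rewrite Hin_A. specialize (HAin x' y'). lra.
- intros x' y' s Hs Hz E1 E2. rewrite (A_eq_at_critical x' y' s Hs E1 E2).
  rewrite chi_A_above by lra.
  assert (S_A f h0 om nu (h x' y' s) (A x' y' s) < 0) by (apply S_A_neg_above; lra).
  lra.
Qed.

(* Along the solution A stays in [0,1], so |S_h| <= K. *)
Lemma S_h_along_bound x y t : 0 <= t <= T -> Rabs (S_h f om nu (h x y t) (A x y t)) <= K.
Proof.
intros Ht. apply S_h_bound; auto; [lra|]. split; [apply A_nonneg|apply A_le1]; auto.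
Qed.

Lemma h_nonneg x y t : 0 <= t <= T -> 0 <= h x y t.
Proof.
intros Ht. apply nonneg_of_perturbed with ((1 + t) * E t). intros eps He.
replace (h x y t + eps * ((1 + t) * E t)) with (1 * h x y t + eps * ((1 + t) * E t)) by ring.
apply (comparison_principle T T 1 h _ _ ltac:(lra) Hrh Hph (or_introl eq_refl)
  (small_barrier_derive eps)); auto.
- intros x' y'. rewrite Hin_h. unfold E. rewrite Eweight_0. specialize (Hhin x' y').
  lra.
- intros x' y' s Hs Hz E1 E2. rewrite (h_eq_at_critical x' y' s Hs E1 E2).
  set (a := h x' y' s) in *. set (D := divu u1 u2 x' y' s).
  assert (HE := Eweight_pos u1 u2 s : 0 < E s).
  assert (HL := L_bounds x' y' s). fold D in HL.
  assert (Ha : a = - (eps * ((1 + s) * E s))) by lra.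
  assert (Hpos : 0 < eps * ((1 + s) * E s))
    by (apply Rmult_lt_0_compat; [lra|apply Rmult_lt_0_compat; lra]).
  rewrite S_h_nonpos_h by lra.
  assert (HX : (- a) * D >= (- a) * (- L s)) by (apply Rmult_ge_compat_l; lra).
  assert (0 < eps * E s) by (apply Rmult_lt_0_compat; lra).
  replace (1 * (0 - a * D) + eps * (1 * E s + (1 + s) * (L s * E s)))
    with ((- a) * D + eps * E s + (eps * ((1 + s) * E s)) * L s) by ring.
  rewrite Ha in HX. nra.
Qed.

Lemma inv_E_derive t : is_derive (fun s => / E s) t (- L t * / E t).
Proof.
assert (HE := Eweight_pos u1 u2 t : 0 < E t).
assert (H := is_derive_inv E t _ (E_derive t) ltac:(lra)).
replace (- L t * / E t) with (- (L t * E t) / E t ^ 2) by (field; lra). exact H.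
Qed.

(* Lower barrier (hl - (2K + del) t - del) / E(t): while E <= 2 the losses
   through S_h and div u cannot push h below it. *)
Lemma h_lower t1 x y : 0 < t1 <= T -> E t1 <= 2 -> (hl - 2 * K * t1) * / E t1 <= h x y t1.
Proof.
intros Ht1 HE1.
assert (HE2 : forall s, 0 <= s <= t1 -> E s <= 2)
  by (intros s Hs; apply Rle_trans with (E t1); [apply E_mono; lra|exact HE1]).
assert (HEp := Eweight_pos u1 u2 t1 : 0 < E t1).
cut (0 <= h x y t1 - (hl - 2 * K * t1) * / E t1); [lra|].
apply nonneg_of_perturbed with ((1 + t1) * / E t1). intros del Hdel.
replace (h x y t1 - (hl - 2 * K * t1) * / E t1 + del * ((1 + t1) * / E t1))
  with (1 * h x y t1 + ((2 * K + del) * t1 + - (hl - del)) * / E t1) by ring.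
apply (comparison_principle T t1 1 h (fun s => ((2 * K + del) * s + - (hl - del)) * / E s)
  (fun s => (2 * K + del) * / E s + ((2 * K + del) * s + - (hl - del)) * (- L s * / E s))
  Ht1 Hrh Hph (or_introl eq_refl)); auto; [| | |lra].
- intros s. apply (is_derive_multR (fun s => (2 * K + del) * s + - (hl - del)) (fun s => / E s)).
  + apply is_derive_affine.
  + apply inv_E_derive.
- intros x' y'. rewrite Hin_h. unfold E. rewrite Eweight_0. specialize (Hhin x' y').
  replace ((2 * K + del) * 0 + - (hl - del)) with (- hl + del) by ring. rewrite Rinv_1. lra.
- intros x' y' s Hs Hz E1 E2. rewrite (h_eq_at_critical x' y' s ltac:(lra) E1 E2).
  assert (Ha0 : 0 <= h x' y' s) by (apply h_nonneg; lra).
  assert (HS := S_h_along_bound x' y' s ltac:(lra)).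
  set (a := h x' y' s) in *. set (D := divu u1 u2 x' y' s).
  set (Sv := S_h f om nu a (A x' y' s)) in *.
  assert (HE := Eweight_pos u1 u2 s : 0 < E s).
  assert (HEs : E s <= 2) by (apply HE2; lra).
  assert (HD : D <= L s) by apply (L_bounds x' y' s).
  assert (HS2 : - K <= Sv) by (apply Rabs_le_between in HS; lra).
  assert (HaD : a * D <= a * L s) by (apply Rmult_le_compat_l; lra).
  assert (HEi : / 2 <= / E s) by (apply Rinv_le_contravar; lra).
  assert (HK := K_nonneg).
  assert (HP : ((2 * K + del) * s + - (hl - del)) * / E s = - a) by lra.
  assert (HX : (2 * K + del) * / 2 <= (2 * K + del) * / E s) by (apply Rmult_le_compat_l; lra).
  replace (1 * (Sv - a * D) + ((2 * K + del) * / E s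
      + ((2 * K + del) * s + - (hl - del)) * (- L s * / E s)))
    with (Sv - a * D + (2 * K + del) * / E s
      + (- (((2 * K + del) * s + - (hl - del)) * / E s)) * L s) by ring.
  rewrite HP. lra.
Qed.

Lemma h_upper t x y : 0 <= t <= T -> h x y t <= E t * (hu + K * t).
Proof.
intros Ht.
assert (HEp := Eweight_pos u1 u2 t : 0 < E t).
cut (0 <= E t * (hu + K * t) - h x y t); [lra|].
apply nonneg_of_perturbed with (E t * (1 + t)). intros del Hdel.
replace (E t * (hu + K * t) - h x y t + del * (E t * (1 + t)))
  with (-1 * h x y t + E t * ((K + del) * t + (hu + del))) by ring.
apply (comparison_principle T T (-1) h (fun s => E s * ((K + del) * s + (hu + del)))
  (fun s => (L s * E s) * ((K + del) * s + (hu + del)) + E s * (K + del))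
  ltac:(lra) Hrh Hph (or_intror eq_refl)); auto.
- intros s. apply (is_derive_multR E (fun s => (K + del) * s + (hu + del))).
  + apply E_derive.
  + apply is_derive_affine.
- intros x' y'. rewrite Hin_h. unfold E. rewrite Eweight_0. specialize (Hhin x' y'). lra.
- intros x' y' s Hs Hz E1 E2. rewrite (h_eq_at_critical x' y' s ltac:(lra) E1 E2).
  assert (Ha0 : 0 <= h x' y' s) by (apply h_nonneg; lra).
  assert (HS := S_h_along_bound x' y' s ltac:(lra)).
  set (a := h x' y' s) in *. set (D := divu u1 u2 x' y' s).
  set (Sv := S_h f om nu a (A x' y' s)) in *.
  assert (HE := E_ge1 s ltac:(lra)).
  assert (HD : - L s <= D) by apply (L_bounds x' y' s).
  assert (HS2 : Sv <= K) by (apply Rabs_le_between in HS; lra).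
  assert (HaD : a * (- L s) <= a * D) by (apply Rmult_le_compat_l; lra).
  assert (HK := K_nonneg).
  assert (HP : E s * ((K + del) * s + (hu + del)) = a) by lra.
  assert (HX : 1 * (K + del) <= E s * (K + del)) by (apply Rmult_le_compat_r; lra).
  replace (-1 * (Sv - a * D) + (L s * E s * ((K + del) * s + (hu + del)) + E s * (K + del)))
    with (- Sv + a * D + L s * (E s * ((K + del) * s + (hu + del))) + E s * (K + del)) by ring.
  rewrite HP. lra.
Qed.

Lemma h_two_sided t : 0 <= t <= T -> 6 * K * t <= hl -> E t <= 2 ->
  forall x y, hl / 4 <= h x y t <= 4 * hu.
Proof.
intros Ht H6 HE x y.
assert (HK := K_nonneg).
assert (Hlu : hl <= hu) by (specialize (Hhin 0 0); lra).
assert (HEp := Eweight_pos u1 u2 t : 0 < E t).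
split.
- destruct (Req_dec t 0) as [Ht0|Ht0].
  + subst t. rewrite Hin_h. specialize (Hhin x y). lra.
  + assert (Hlo := h_lower t x y ltac:(lra) HE).
    assert (Hi : / 2 <= / E t) by (apply Rinv_le_contravar; lra).
    assert (Hp : 0 <= hl - 2 * K * t) by nra.
    assert ((hl - 2 * K * t) * / 2 <= (hl - 2 * K * t) * / E t) by (apply Rmult_le_compat_l; lra).
    lra.
- assert (Hup := h_upper t x y Ht).
  assert (Hp : 0 <= hu + K * t) by nra.
  assert (E t * (hu + K * t) <= 2 * (hu + K * t)) by (apply Rmult_le_compat_r; lra).
  lra.
Qed.

Let Dop := fun s => 0 < s < T.
Let Dcl := fun s => 0 <= s <= T.
Let flux1 := fun a b c => h a b c * u1 a b c.
Let flux2 := fun a b c => h a b c * u2 a b c.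

Lemma h_cont3_open x y t : Dop t -> cont3 Dop h x y t.
Proof.
intros Ht. apply cont3_weaken with Dcl; [unfold Dop, Dcl; intros; lra|].
apply cont3_of_reg; auto. unfold Dop in Ht; lra.
Qed.

Lemma pd_h_cont3 d x y t : Dop t -> cont3 Dop (pd d h) x y t.
Proof. intros Ht. exact (cont3_pd_of_reg T h d x y t Hrh Ht). Qed.

Lemma cont3_restrict_open (v : R -> R -> R -> R) x y t :
  cont3 (fun _ => True) v x y t -> cont3 Dop v x y t.
Proof. apply cont3_weaken. auto. Qed.

Lemma dx_flux1 x y t : Dop t -> dx flux1 x y t = dx h x y t * u1 x y t + h x y t * dx u1 x y t.
Proof.
intros Ht. apply (Derive_mult (fun z => h z y t) (fun z => u1 z y t)).
- apply (proj1 (proj2 Hrh) Defs.Dx), Ht.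
- apply (smooth3_ex_pd Defs.Dx); auto.
Qed.

Lemma dy_flux2 x y t : Dop t -> dy flux2 x y t = dy h x y t * u2 x y t + h x y t * dy u2 x y t.
Proof.
intros Ht. apply (Derive_mult (fun z => h x z t) (fun z => u2 x z t)).
- apply (proj1 (proj2 Hrh) Defs.Dy), Ht.
- apply (smooth3_ex_pd Defs.Dy); auto.
Qed.

Lemma flux1_cont3 x y t : Dop t -> cont3 Dop flux1 x y t.
Proof.
intros Ht. apply cont3_mult; [apply h_cont3_open, Ht|apply cont3_restrict_open, smooth3_cont3; auto].
Qed.

Lemma dx_flux1_cont3 x y t : Dop t -> cont3 Dop (dx flux1) x y t.
Proof.
intros Ht.
apply cont3_ext with (fun a b c => dx h a b c * u1 a b c + h a b c * dx u1 a b c); auto.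
- intros a b c Hc. symmetry. apply dx_flux1, Hc.
- apply cont3_plus; apply cont3_mult.
  + apply (pd_h_cont3 Defs.Dx), Ht.
  + apply cont3_restrict_open, smooth3_cont3; auto.
  + apply h_cont3_open, Ht.
  + apply cont3_restrict_open, (smooth3_cont3_pd Defs.Dx); auto.
Qed.

Lemma dy_flux2_cont3 x y t : Dop t -> cont3 Dop (dy flux2) x y t.
Proof.
intros Ht.
apply cont3_ext with (fun a b c => dy h a b c * u2 a b c + h a b c * dy u2 a b c); auto.
- intros a b c Hc. symmetry. apply dy_flux2, Hc.
- apply cont3_plus; apply cont3_mult.
  + apply (pd_h_cont3 Defs.Dy), Ht.
  + apply cont3_restrict_open, smooth3_cont3; auto.
  + apply h_cont3_open, Ht.
  + apply cont3_restrict_open, (smooth3_cont3_pd Defs.Dy); auto.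
Qed.

Let Sh := fun x y t => S_h f om nu (h x y t) (A x y t).

Lemma Sh_eq x y t : Dop t -> Sh x y t = dt h x y t + dx flux1 x y t + dy flux2 x y t.
Proof. intros Ht. unfold Sh. rewrite <- (Hpde_h x y t Ht). unfold divflux. fold flux1 flux2. ring. Qed.

Lemma Sh_cont3 x y t : Dop t -> cont3 Dop Sh x y t.
Proof.
intros Ht. apply cont3_ext with (fun a b c => dt h a b c + dx flux1 a b c + dy flux2 a b c); auto.
- intros a b c Hc. symmetry. apply Sh_eq, Hc.
- apply cont3_plus; [apply cont3_plus|].
  + apply (pd_h_cont3 Defs.Dt), Ht.
  + apply dx_flux1_cont3, Ht.
  + apply dy_flux2_cont3, Ht.
Qed.

Lemma RInt_y_continuous (g : R -> R -> R -> R) t0 x :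
  Dop t0 -> (forall a b c, Dop c -> cont3 Dop g a b c) ->
  continuous (fun z => RInt (fun y => g z y t0) 0 1) x.
Proof.
intros Ht0 Hc. apply ed_continuous. intros eps He.
destruct (RInt_y_cont g Dop x t0 Ht0 Hc eps He) as [d [Hd K1]].
exists d; split; auto. intros x' Hx'. apply K1; auto. rewrite Rminus_diag, Rabs_R0; lra.
Qed.

Lemma RInt_y_derive_t x t : Dop t ->
  is_derive (fun z => RInt (fun y => h x y z) 0 1) t (RInt (fun y => dt h x y t) 0 1).
Proof.
intros Ht.
apply (is_derive_RInt_param (fun z y => h x y z) 0 1 t).
- eapply filter_imp; [|exact (open_interval_locally 0 T t Ht)].
  intros z Hz y _. apply (proj1 (proj2 Hrh) Defs.Dt), Hz.
- intros y _. apply (cont3_slice_ty (dt h) x y t).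
  apply cont3_interior with Dop 0 T; [exact Ht|intros s Hs; exact Hs|].
  apply (pd_h_cont3 Defs.Dt), Ht.
- eapply filter_imp; [|exact (open_interval_locally 0 T t Ht)]. intros z Hz.
  apply ex_RInt_slice_y with Dop; auto. intros y. apply h_cont3_open, Hz.
Qed.

Lemma mass_derive t0 : Dop t0 ->
  is_derive (fun z => RInt (fun x => RInt (fun y => h x y z) 0 1) 0 1) t0
    (RInt (fun x => RInt (fun y => dt h x y t0) 0 1) 0 1).
Proof.
intros Ht0.
rewrite (RInt_extR _ (fun x => Derive (fun u => RInt (fun y => h x y u) 0 1) t0))
  by (intros x _; symmetry; apply is_derive_unique, RInt_y_derive_t, Ht0).
apply (is_derive_RInt_param (fun z x => RInt (fun y => h x y z) 0 1) 0 1 t0).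
- eapply filter_imp; [|exact (open_interval_locally 0 T t0 Ht0)].
  intros z Hz x _. eexists. apply RInt_y_derive_t, Hz.
- intros x _ eps.
  destruct (RInt_y_cont (dt h) Dop x t0 Ht0 (fun a b c Hc => pd_h_cont3 Defs.Dt a b c Hc)
    eps (cond_pos eps)) as [d [Hd K1]].
  destruct (open_interval_ball 0 T t0 Ht0) as [d2 [Hd2 K2]].
  exists (mkposreal _ (Rmin_pos _ _ Hd Hd2)). simpl. intros u v Hu Hv.
  assert (Q1 := Rmin_l d d2). assert (Q2 := Rmin_r d d2).
  assert (Du : Dop u) by (apply K2; lra).
  assert (Ev : Derive (fun z => RInt (fun y => h v y z) 0 1) u = RInt (fun y => dt h v y u) 0 1)
    by (apply is_derive_unique, RInt_y_derive_t, Du).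
  assert (Ex : Derive (fun z => RInt (fun y => h x y z) 0 1) t0 = RInt (fun y => dt h x y t0) 0 1)
    by (apply is_derive_unique, RInt_y_derive_t, Ht0).
  rewrite Ev, Ex.
  apply K1; auto; lra.
- eapply filter_imp; [|exact (open_interval_locally 0 T t0 Ht0)]. intros z Hz.
  apply ex_RInt_cont. intros x _.
  apply (cont3_slice_y Dop (fun _ b' t' => RInt (fun y => h b' y t') 0 1) 0 x z); auto.
  apply cont3_RInt_y; auto. intros; apply h_cont3_open; auto.
Qed.

(* By periodicity the fluxes have zero integral over the torus. *)
Lemma dy_flux2_integral x t0 : Dop t0 -> RInt (fun y => dy flux2 x y t0) 0 1 = 0.
Proof.
intros Ht0.
change (RInt (Derive (fun w => flux2 x w t0)) 0 1 = 0).
rewrite RInt_Derive.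
- unfold flux2. destruct (Hph x 0 t0) as [_ P1]. destruct (Hp2 x 0 t0) as [_ P2].
  rewrite Rplus_0_l in P1, P2. rewrite P1, P2. apply Rminus_diag_eq. reflexivity.
- intros z _. apply ex_derive_mult.
  + apply (proj1 (proj2 Hrh) Defs.Dy), Ht0.
  + apply (smooth3_ex_pd Defs.Dy); auto.
- intros z _. apply (cont3_slice_y Dop (dy flux2) x z t0); auto. apply dy_flux2_cont3, Ht0.
Qed.

Lemma RInt_y_derive_x x t0 : Dop t0 ->
  is_derive (fun z => RInt (fun y => flux1 z y t0) 0 1) x (RInt (fun y => dx flux1 x y t0) 0 1).
Proof.
intros Ht0.
apply (is_derive_RInt_param (fun z y => flux1 z y t0) 0 1 x).
- apply filter_forall. intros z y _. apply ex_derive_mult.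
  + apply (proj1 (proj2 Hrh) Defs.Dx), Ht0.
  + apply (smooth3_ex_pd Defs.Dx); auto.
- intros y _. apply (cont3_slice_xy Dop (dx flux1) x y t0); auto. apply dx_flux1_cont3, Ht0.
- apply filter_forall. intros z. apply ex_RInt_slice_y with Dop; auto.
  intros; apply flux1_cont3, Ht0.
Qed.

Lemma dx_flux1_integral t0 : Dop t0 -> RInt (fun x => RInt (fun y => dx flux1 x y t0) 0 1) 0 1 = 0.
Proof.
intros Ht0.
set (Phi := fun z => RInt (fun y => flux1 z y t0) 0 1).
assert (ED : forall x, Derive Phi x = RInt (fun y => dx flux1 x y t0) 0 1)
  by (intros x; apply is_derive_unique, RInt_y_derive_x, Ht0).
transitivity (RInt (Derive Phi) 0 1); [apply RInt_extR; intros x _; rewrite ED; reflexivity|].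
rewrite RInt_Derive.
- unfold Phi. rewrite (RInt_extR (fun y => flux1 1 y t0) (fun y => flux1 0 y t0)).
  + apply Rminus_diag_eq. reflexivity.
  + intros y _. unfold flux1. destruct (Hph 0 y t0) as [P1 _]. destruct (Hp1 0 y t0) as [P2 _].
    rewrite Rplus_0_l in P1, P2. rewrite P1, P2. reflexivity.
- intros z _. eexists. apply RInt_y_derive_x, Ht0.
- intros z _. apply ed_continuous. intros eps He.
  destruct (RInt_y_cont (dx flux1) Dop z t0 Ht0 (fun a b c Hc => dx_flux1_cont3 a b c Hc) eps He)
    as [d [Hd K1]].
  exists d; split; auto. intros x' Hx'. rewrite !ED. apply K1; auto.
  rewrite Rminus_diag, Rabs_R0; lra.
Qed.

Lemma mass_rate_eq t0 : Dop t0 ->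
  RInt (fun x => RInt (fun y => dt h x y t0) 0 1) 0 1 =
  RInt (fun x => RInt (fun y => Sh x y t0) 0 1) 0 1.
Proof.
intros Ht0.
set (sx := fun x => RInt (fun y => Sh x y t0) 0 1).
set (qx := fun x => RInt (fun y => dx flux1 x y t0) 0 1).
assert (exS : forall x, ex_RInt (fun y => Sh x y t0) 0 1)
  by (intros x; apply ex_RInt_slice_y with Dop; [intros y; apply Sh_cont3|]; exact Ht0).
assert (exQ : forall x, ex_RInt (fun y => dx flux1 x y t0) 0 1)
  by (intros x; apply ex_RInt_slice_y with Dop; [intros y; apply dx_flux1_cont3|]; exact Ht0).
assert (exQ2 : forall x, ex_RInt (fun y => dy flux2 x y t0) 0 1)
  by (intros x; apply ex_RInt_slice_y with Dop; [intros y; apply dy_flux2_cont3|]; exact Ht0).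
(* integrating in y kills the y-flux *)
assert (Hy : forall x, RInt (fun y => dt h x y t0) 0 1 = sx x - qx x).
{ intros x. unfold sx, qx.
  rewrite (RInt_extR (fun y => dt h x y t0)
    (fun y => (Sh x y t0 - dx flux1 x y t0) - dy flux2 x y t0))
    by (intros y _; rewrite Sh_eq by exact Ht0; ring).
  rewrite (RInt_minusR _ _ 0 1 (ex_RInt_minusR _ _ 0 1 (exS x) (exQ x)) (exQ2 x)).
  rewrite (RInt_minusR _ _ 0 1 (exS x) (exQ x)).
  rewrite dy_flux2_integral by exact Ht0. apply Rminus_0_r. }
assert (exs : ex_RInt sx 0 1).
{ apply ex_RInt_cont. intros x _. apply RInt_y_continuous; [exact Ht0|].
  intros a b c Hc. apply Sh_cont3, Hc. }
assert (exq : ex_RInt qx 0 1).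
{ apply ex_RInt_cont. intros x _. apply RInt_y_continuous; [exact Ht0|].
  intros a b c Hc. apply dx_flux1_cont3, Hc. }
(* integrating in x kills the x-flux *)
rewrite (RInt_extR _ (fun x => sx x - qx x)) by (intros; apply Hy).
rewrite RInt_minusR by assumption. unfold qx. rewrite dx_flux1_integral by exact Ht0. apply Rminus_0_r.
Qed.

Lemma mass_rate_bound t0 : Dop t0 ->
  Rabs (RInt (fun x => RInt (fun y => dt h x y t0) 0 1) 0 1) <= K.
Proof.
intros Ht0. rewrite mass_rate_eq by exact Ht0.
assert (HS : forall x y, Rabs (Sh x y t0) <= K)
  by (intros; apply S_h_along_bound; unfold Dop in Ht0; lra).
replace K with ((1 - 0) * K) by ring.
apply abs_RInt_le_const; [lra| |].
- apply ex_RInt_cont. intros; apply RInt_y_continuous; auto. intros; apply Sh_cont3; auto.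
- intros x _. replace K with ((1 - 0) * K) by ring.
  apply abs_RInt_le_const; [lra| |intros; apply HS].
  apply ex_RInt_slice_y with Dop; auto. intros; apply Sh_cont3, Ht0.
Qed.

Let mass := fun s => RInt (fun x => RInt (fun y => h x y s) 0 1) 0 1.

Lemma mass_cont_within t0 : Dcl t0 -> forall eps, 0 < eps -> exists d, 0 < d /\
  forall t, Rabs (t - t0) < d -> Dcl t -> Rabs (mass t - mass t0) < eps.
Proof.
intros Ht0 eps He.
destruct (RInt_y_cont (fun a b c => RInt (fun y => h b y c) 0 1) Dcl 0 t0 Ht0) with (eps := eps)
  as [d [Hd K1]]; auto.
{ intros a b c Hc. apply cont3_RInt_y; auto. intros; apply cont3_of_reg; auto. }
exists d; split; auto. intros t Ht Dt. apply (K1 0 t); auto. rewrite Rminus_diag, Rabs_R0; lra.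
Qed.

Lemma mass_deviation t : 0 <= t <= T -> Rabs (mass t - mass 0) <= K * t.
Proof.
intros Ht. destruct (Req_dec t 0) as [Ht0|Ht0].
{ subst t. rewrite Rminus_diag, Rabs_R0, Rmult_0_r. lra. }
apply mean_value_bound with (fun s => RInt (fun x => RInt (fun y => dt h x y s) 0 1) 0 1).
- apply K_nonneg.
- lra.
- intros s Hs. apply mass_derive. unfold Dop. lra.
- intros s Hs. apply mass_rate_bound. unfold Dop. lra.
- intros s Hs eps He.
  destruct (mass_cont_within s) with (eps := eps) as [d [Hd K1]]; [unfold Dcl; lra|lra|].
  exists d. split; auto. intros r Hr Hr2. apply K1; auto. unfold Dcl. lra.
Qed.

End Model.

Theorem mainTheorem3
  (om nu T h0 fl fu hl hu : R) (f : R -> R)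
  (u1 u2 h A : R -> R -> R -> R) (hin Ain : R -> R -> R) :
  0 < om < 1 -> 0 < nu < 1 -> 0 < T -> 0 < h0 ->
  smooth1 f -> (forall z, fl <= f z <= fu) ->
  smooth3 u1 -> smooth3 u2 -> periodic3 u1 -> periodic3 u2 ->
  periodic3 h -> periodic3 A ->
  classical_reg T h -> classical_reg T A ->
  (forall x y, h x y 0 = hin x y) -> (forall x y, A x y 0 = Ain x y) ->
  (forall x y t, 0 < t < T ->
     dt h x y t + divflux h u1 u2 x y t = S_h f om nu (h x y t) (A x y t)) ->
  (forall x y t, 0 < t < T ->
     dt A x y t + divflux A u1 u2 x y t =
       S_A f h0 om nu (h x y t) (A x y t)
       + A x y t * divu u1 u2 x y t * chi_A om (A x y t)) ->
  0 < hl -> (forall x y, hl <= hin x y <= hu) ->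
  (forall x y, 0 <= Ain x y <= 1) ->
  let K := Rabs fu + Rabs fl in
  (forall x y t, 0 <= t <= T -> 0 <= h x y t) /\
  (forall t, 0 <= t <= T ->
     6 * K * t <= hl ->
     exp (RInt (fun s => LinfOmega (fun x y => divu u1 u2 x y s)) 0 t) <= 2 ->
     forall x y, hl / 4 <= h x y t <= 4 * hu) /\
  (forall t, 0 <= t <= T ->
     6 * K * torus_meas * t <= intOmega hin ->
     intOmega hin / 2 <= intOmega (fun x y => h x y t) <= 2 * intOmega hin).
Proof.
intros Hom Hnu HT Hh0 Hfs Hf Hu1 Hu2 Hp1 Hp2 Hph HpA Hrh HrA Hin_h Hin_A Hpde_h Hpde_A
  Hhl Hhin HAin K.
assert (HK : 0 <= K) by apply K_nonneg.
split; [|split].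
- exact (h_nonneg om nu T hl hu f u1 u2 h A hin Hnu HT Hu1 Hu2 Hp1 Hp2 Hph Hrh
    Hin_h Hpde_h Hhl Hhin).
- exact (h_two_sided om nu T h0 fl fu hl hu f u1 u2 h A hin Ain Hom Hnu HT Hh0 Hf
    Hu1 Hu2 Hp1 Hp2 Hph HpA Hrh HrA Hin_h Hin_A Hpde_h Hpde_A Hhl Hhin HAin).
- intros t Ht H6. unfold torus_meas in H6.
  replace (intOmega hin) with (intOmega (fun x y => h x y 0)) in *
    by (unfold intOmega; apply RInt_extR; intros x _; apply RInt_extR; intros y _; apply Hin_h).
  assert (Hdev := mass_deviation om nu T h0 fl fu f u1 u2 h A Ain Hom Hnu HT Hh0 Hf
    Hu1 Hu2 Hp1 Hp2 Hph HpA Hrh HrA Hin_A Hpde_h Hpde_A HAin t Ht).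
  apply Rabs_le_between' in Hdev.
  assert (0 <= K * t) by (apply Rmult_le_pos; lra).
  unfold intOmega in *. fold K in Hdev. lra.
Qed.
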